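(* Assume $\sigma_1(x)=\tfrac12\sigma_1''(0)(x-a_1)(x-b_1)$ and $\sigma_2(x)=\tfrac12\sigma_2''(0)(x-a_2)(x-b_2)$ with $\sigma_1''(0)\ne0$, $\sigma_2''(0)\ne0$ and real zeros satisfying $0<a_1<a_2<b_1<b_2$, and assume $0<q^2\Lambda_q<1$, where $\Lambda_q=q^{-2}\Big[1+\frac{(1-q^{-1})\tau'(0)}{\frac12\sigma_1''(0)}\Big]$. Put $a=a_2$, $b=q^{-1}b_1$, and suppose $q^{-N-1}a=b$ for some $N\in\mathbb{N}_0$. Let $$\rho(x)=|x|^{\iota}\frac{(qa/x,\,x/b;q)_\infty}{(a_1/x,\,x/b_2;q)_\infty},\qquad q^{\iota}=\frac{q^{-3}\sigma_2''(0)b_2}{\sigma_1''(0)b}.$$ Then there exist polynomials $P_0,\dots,P_N$, with $P_n$ of degree $n$ a solution of the q-EHT with $\lambda=\lambda_n$, and nonzero constants $d_n^2$, such that for $m,n\in\{0,\dots,N\}$ $$\int_a^{b}P_n(x)P_m(x)\rho(x)\,d_{q^{-1}}x=d_n^2\delta_{mn},$$ i.e. orthogonality with respect to $\rho$ supported on $\{q^{-k}a\}_{k=0}^N$.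
   Context: Throughout $0<q<1$. For a function $y$ and $\zeta\in\{q,q^{-1}\}$, $D_\zeta y(x)=\frac{y(x)-y(\zeta x)}{(1-\zeta)x}$ for $x\ne0$ and $D_\zeta y(0)=y'(0)$; $[n]_q=\frac{1-q^n}{1-q}$. Let $\sigma_1$ be a real polynomial of degree at most two, $\tau(x)=\tau'(0)x+\tau(0)$ a real polynomial with $\tau'(0)\ne0$, and $\sigma_2(x):=q[\sigma_1(x)+(1-q^{-1})x\tau(x)]$. The q-EHT with parameter $n$ is $\sigma_1(x)D_{q^{-1}}D_qy(x)+\tau(x)D_qy(x)+\lambda_ny(x)=0$, $\lambda_n=-[n]_q\big(\tau'(0)+\tfrac12[n-1]_{q^{-1}}\sigma_1''(0)\big)$. $(\alpha;q)_\infty=\prod_{k\ge0}(1-\alpha q^k)$, $(\alpha_1,\dots,\alpha_r;q)_\infty=\prod_i(\alpha_i;q)_\infty$. For $q^{\iota}=c$ ($c\ne0$), $\iota$ is any complex number with $e^{\iota\ln q}=c$ and $|x|^{\iota}:=e^{\iota\ln|x|}$. For $a>0$ and $b=q^{-N-1}a$, $\int_a^{b}f(x)\,d_{q^{-1}}x=(q^{-1}-1)a\sum_{k=0}^{N}q^{-k}f(q^{-k}a)$. *)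

From Stdlib Require Import Reals ZArith.
From Coquelicot Require Import Coquelicot.
Open Scope R_scope.

Definition Dz (zeta : R) (y : R -> R) (x : R) : R :=
  if Req_EM_T x 0 then Derive y 0
  else (y x - y (zeta * x)) / ((1 - zeta) * x).

Definition qnum (q : R) (k : Z) : R := (1 - powerRZ q k) / (1 - q).

Fixpoint qpoch_fin (alpha q : R) (n : nat) : R :=
  match n with
  | O => 1
  | S k => qpoch_fin alpha q k * (1 - alpha * q ^ k)
  end.
Definition qpoch_inf (alpha q : R) : R :=
  real (Lim_seq (fun n => qpoch_fin alpha q n)).

Definition is_poly_deg (p : R -> R) (n : nat) : Prop :=
  exists c : nat -> R, c n <> 0 /\
    forall x, p x = sum_f_R0 (fun k => c k * x ^ k) n.

Definition cexp (z : C) : C :=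
  (exp (fst z) * cos (snd z), exp (fst z) * sin (snd z)).

Definition cpow_abs (x : R) (iota : C) : C :=
  cexp (Cmult iota (RtoC (ln (Rabs x)))).

Definition solves_qEHT (q : R) (sigma1 tau : R -> R) (lam : R) (y : R -> R) : Prop :=
  forall x, sigma1 x * Dz (/ q) (Dz q y) x + tau x * Dz q y x + lam * y x = 0.

Definition lambda_n (q t1 s1 : R) (n : nat) : R :=
  - qnum q (Z.of_nat n) * (t1 + / 2 * qnum (/ q) (Z.of_nat n - 1) * s1).

(* Jackson integral int_a^{q^{-N-1} a} f(x) d_{q^{-1}} x for complex-valued f *)
Fixpoint csum (f : nat -> C) (n : nat) : C :=
  match n with
  | O => f O
  | S k => Cplus (csum f k) (f (S k))
  end.
Definition jackson_inv (q a : R) (N : nat) (f : R -> C) : C :=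
  Cmult (RtoC ((/ q - 1) * a))
        (csum (fun k => Cmult (RtoC ((/ q) ^ k)) (f ((/ q) ^ k * a))) N).

(* The q-EHT operator maps polynomials of degree <= n into themselves and is triangular
   on monomials, with diagonal entries -lambda_j.  Since 0 < q^2 Lambda_q < 1 the lambda_j
   are pairwise distinct, so back-substitution gives an eigenpolynomial P_n of exact
   degree n for every n.

   On the nodes x_k = q^-k a the equation becomes the three-term difference equation
   A_k (f_(k-1) - f_k) + C_k (f_(k+1) - f_k) = -lambda f_k with
   A_k = sigma2(x_k) / ((1-q) x_k)^2 and C_k = q^2 sigma1(x_k) / ((1-q) x_k)^2.
   The weights w_k = q^-k rho(x_k) satisfy the Pearson equation
   w_(k+1) sigma2(x_(k+1)) = w_k sigma1(x_k), i.e. w_(k+1) A_(k+1) = w_k C_k, while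
   A_0 = 0 (sigma2(a2) = 0) and C_N = 0 (sigma1(b1) = 0).  Summation by parts then
   makes the difference operator symmetric for sum_k w_k f_k g_k, so eigenpolynomials
   with different eigenvalues are orthogonal.  The weights are positive and P_n cannot
   vanish at the n + 1 nodes x_0, ..., x_n, so the norms d_n^2 are nonzero. *)

From Stdlib Require Import Reals ZArith Lra Lia Psatz FunctionalExtensionality.
From Coquelicot Require Import Coquelicot.
Open Scope R_scope.

Definition peval (c : nat -> R) (n : nat) (x : R) : R := sum_f_R0 (fun k => c k * x ^ k) n.
Definition qint (z : R) (k : nat) : R := (1 - z ^ k) / (1 - z).
Definition qderiv_coef (z : R) (c : nat -> R) (k : nat) : R := c (S k) * qint z (S k).
Definition shift_coef (c : nat -> R) (k : nat) : R := match k with O => 0 | S i => c i end.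

Lemma peval_S c n x : peval c (S n) x = peval c n x + c (S n) * x ^ S n.
Proof. reflexivity. Qed.

Lemma peval_0 c x : peval c 0 x = c O.
Proof. unfold peval; simpl; ring. Qed.

Lemma peval_at_0 c n : peval c n 0 = c O.
Proof. induction n as [|n IH]; [apply peval_0|]. rewrite peval_S, IH. simpl. ring. Qed.

Lemma peval_ext c d n x : (forall k, c k = d k) -> peval c n x = peval d n x.
Proof. intro H. unfold peval. apply sum_eq. intros k _. rewrite H. reflexivity. Qed.

Lemma peval_plus c d n x : peval (fun k => c k + d k) n x = peval c n x + peval d n x.
Proof. induction n as [|n IH]; [unfold peval; simpl; ring|]. rewrite !peval_S, IH. ring. Qed.

Lemma peval_scal u c n x : peval (fun k => u * c k) n x = u * peval c n x.
Proof. induction n as [|n IH]; [unfold peval; simpl; ring|]. rewrite !peval_S, IH. ring. Qed.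

Lemma peval_shift c n x : x * peval c n x = peval (shift_coef c) (S n) x.
Proof.
  induction n as [|n IH]; [unfold peval, shift_coef; simpl; ring|].
  rewrite peval_S, (peval_S (shift_coef c) (S n)), <- IH. simpl. ring.
Qed.

Lemma peval_trunc c n m x :
  (forall k, (n < k)%nat -> c k = 0) -> (n <= m)%nat -> peval c m x = peval c n x.
Proof.
  intros Hc Hm. induction Hm as [|m Hm IH]; [reflexivity|].
  rewrite peval_S, IH, Hc by lia. ring.
Qed.

Lemma qint_0 z : qint z 0 = 0.
Proof. unfold qint; simpl; unfold Rdiv; ring. Qed.

Lemma peval_qdiff z c n x : z <> 1 ->
  peval c (S n) x - peval c (S n) (z * x) = (1 - z) * x * peval (qderiv_coef z c) n x.
Proof.
  intro hz. assert (1 - z <> 0) by lra.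
  induction n as [|n IH].
  - unfold peval, qderiv_coef, qint. simpl. field. auto.
  - rewrite (peval_S c (S n) x), (peval_S c (S n) (z * x)), (peval_S (qderiv_coef z c) n x).
    replace (peval c (S n) x + c (S (S n)) * x ^ S (S n)
             - (peval c (S n) (z * x) + c (S (S n)) * (z * x) ^ S (S n)))
      with (peval c (S n) x - peval c (S n) (z * x)
            + c (S (S n)) * (x ^ S (S n) - (z * x) ^ S (S n))) by ring.
    rewrite IH. unfold qderiv_coef, qint. rewrite Rpow_mult_distr. simpl. field. auto.
Qed.

Lemma is_derive_peval_0 c n : is_derive (peval c (S n)) 0 (c 1%nat).
Proof.
  induction n as [|n IH].
  - apply is_derive_ext with (fun x => c O + c 1%nat * x).
    { intro t. unfold peval; simpl; ring. }
    auto_derive; auto. ring.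
  - apply is_derive_ext with (fun x => peval c (S n) x + c (S (S n)) * x ^ S (S n)).
    { intro t. reflexivity. }
    replace (c 1%nat) with (c 1%nat + 0) by ring.
    apply (is_derive_plus (peval c (S n)) (fun x => c (S (S n)) * x ^ S (S n))); auto.
    auto_derive; auto. simpl; ring.
Qed.

Lemma Dz_peval z c n : z <> 1 -> Dz z (peval c (S n)) = peval (qderiv_coef z c) n.
Proof.
  intro hz. apply functional_extensionality. intro x. unfold Dz.
  destruct (Req_EM_T x 0) as [->|hx].
  - rewrite peval_at_0, (is_derive_unique _ _ _ (is_derive_peval_0 c n)).
    unfold qderiv_coef, qint. simpl. field. lra.
  - apply (Rmult_eq_reg_l ((1 - z) * x)).
    + rewrite <- peval_qdiff by auto. field. split; lra.
    + apply Rmult_integral_contrapositive; split; lra.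
Qed.

(* For sigma1 x = e2 x^2 + e1 x + e0 and tau x = t1 x + t0, the q-EHT operator maps
   x^k to qEHT_diag k x^k + qEHT_sub1 (k-1) x^(k-1) + qEHT_sub2 (k-2) x^(k-2). *)
Definition qEHT_diag (q e2 t1 : R) (k : nat) : R :=
  qint q k * (e2 * qint (/ q) (pred k) + t1).
Definition qEHT_sub1 (q e1 t0 : R) (k : nat) : R :=
  qint q (S k) * (e1 * qint (/ q) k + t0).
Definition qEHT_sub2 (q e0 : R) (k : nat) : R :=
  e0 * qint q (S (S k)) * qint (/ q) (S k).

Lemma inv_neq_1 q : 0 < q < 1 -> / q <> 1.
Proof. intros hq h. assert (q = 1) by (rewrite <- (Rinv_inv q), h; apply Rinv_1). lra. Qed.

Lemma qEHT_peval q e2 e1 e0 t1 t0 c n x :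
  0 < q < 1 -> (forall k, (n < k)%nat -> c k = 0) ->
  (e2 * x ^ 2 + e1 * x + e0) * Dz (/ q) (Dz q (peval c (S (S n)))) x
  + (t1 * x + t0) * Dz q (peval c (S (S n))) x
  = peval (fun k => qEHT_diag q e2 t1 k * c k + qEHT_sub1 q e1 t0 k * c (S k)
                    + qEHT_sub2 q e0 k * c (S (S k))) (S (S n)) x.
Proof.
  intros hq Hc.
  rewrite (Dz_peval q) by lra. rewrite (Dz_peval (/ q)) by (apply inv_neq_1; auto).
  set (d1 := qderiv_coef q c). set (d2 := qderiv_coef (/ q) d1).
  assert (Z1 : forall k, (n <= k)%nat -> d1 k = 0).
  { intros k hk. unfold d1, qderiv_coef. rewrite Hc by lia. ring. }
  assert (Z2 : forall k, (n < S (S k))%nat -> d2 (S k) = 0).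
  { intros k hk. unfold d2, qderiv_coef. rewrite Z1 by lia. ring. }
  assert (E1 : peval d1 (S n) x = peval d1 (S (S n)) x).
  { rewrite (peval_S d1 (S n)), (Z1 (S (S n))) by lia. ring. }
  assert (E2 : peval d2 n x = peval d2 (S (S n)) x).
  { rewrite !peval_S, !Z2 by lia. ring. }
  assert (E2' : peval (shift_coef d2) (S n) x = peval (shift_coef d2) (S (S n)) x).
  { rewrite (peval_S _ (S n)). simpl shift_coef. rewrite Z2 by lia. ring. }
  replace ((e2 * x ^ 2 + e1 * x + e0) * peval d2 n x + (t1 * x + t0) * peval d1 (S n) x)
    with (e2 * (x * (x * peval d2 n x)) + e1 * (x * peval d2 n x) + e0 * peval d2 n x
          + t1 * (x * peval d1 (S n) x) + t0 * peval d1 (S n) x) by ring.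
  rewrite (peval_shift d2), (peval_shift (shift_coef d2)), (peval_shift d1), E2', E2, E1.
  rewrite <- !peval_scal, <- !peval_plus. apply peval_ext. intro k.
  unfold d2, d1, qderiv_coef, shift_coef, qEHT_diag, qEHT_sub1, qEHT_sub2.
  destruct k as [|[|k]]; simpl pred; rewrite ?qint_0; ring.
Qed.

Section TriangularEigenvector.

Variables (mu be ga : nat -> R) (n : nat).

(* [tri_pair m] is the pair of coefficients (c_(n-m), c_(n-m+1)), computed
   downwards from c_n = 1 by solving the recurrence of [tri_coef_rec] for c_(n-m). *)
Fixpoint tri_pair (m : nat) : R * R :=
  match m with
  | O => (1, 0)
  | S m' => let p := tri_pair m' in
            (- (be (n - S m')%nat * fst p + ga (n - S m')%nat * snd p)
               / (mu (n - S m')%nat - mu n), fst p)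
  end.

Definition tri_coef (j : nat) : R := if (j <=? n)%nat then fst (tri_pair (n - j)) else 0.

Lemma tri_coef_top : tri_coef n = 1.
Proof. unfold tri_coef. rewrite Nat.leb_refl, Nat.sub_diag. reflexivity. Qed.

Lemma tri_coef_above j : (n < j)%nat -> tri_coef j = 0.
Proof. intro H. unfold tri_coef. destruct (Nat.leb_spec j n); [lia | reflexivity]. Qed.

Hypothesis mu_neq : forall j, (j < n)%nat -> mu j <> mu n.

Lemma tri_coef_rec j :
  tri_coef j * (mu j - mu n) + tri_coef (S j) * be j + tri_coef (S (S j)) * ga j = 0.
Proof.
  destruct (lt_eq_lt_dec j n) as [[Hlt| ->]|Hgt].
  - assert (Hsnd : snd (tri_pair (n - S j)) = tri_coef (S (S j))).
    { unfold tri_coef. destruct (Nat.leb_spec (S (S j)) n).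
      - replace (n - S j)%nat with (S (n - S (S j))) by lia. reflexivity.
      - replace (n - S j)%nat with 0%nat by lia. reflexivity. }
    unfold tri_coef at 1 2. destruct (Nat.leb_spec j n), (Nat.leb_spec (S j) n); try lia.
    replace (n - j)%nat with (S (n - S j)) by lia. cbn [tri_pair fst].
    replace (n - S (n - S j))%nat with j by lia. rewrite Hsnd.
    field. apply Rminus_eq_contra, mu_neq, Hlt.
  - rewrite tri_coef_top, !tri_coef_above by lia. ring.
  - rewrite !tri_coef_above by lia. ring.
Qed.

End TriangularEigenvector.

Definition qEHT_eigencoef (q e2 e1 e0 t1 t0 : R) (n : nat) : nat -> R :=
  tri_coef (qEHT_diag q e2 t1) (qEHT_sub1 q e1 t0) (qEHT_sub2 q e0) n.

Definition qEHT_eigenpoly (q e2 e1 e0 t1 t0 : R) (n : nat) : R -> R :=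
  peval (qEHT_eigencoef q e2 e1 e0 t1 t0 n) (S (S n)).

Lemma qEHT_eigenpoly_deg q e2 e1 e0 t1 t0 n :
  is_poly_deg (qEHT_eigenpoly q e2 e1 e0 t1 t0 n) n.
Proof.
  exists (qEHT_eigencoef q e2 e1 e0 t1 t0 n). split.
  - unfold qEHT_eigencoef. rewrite tri_coef_top. lra.
  - intro x. apply peval_trunc; [intros k hk; apply tri_coef_above; exact hk | lia].
Qed.

Lemma qEHT_eigenpoly_eq q e2 e1 e0 t1 t0 n x : 0 < q < 1 ->
  (forall j, (j < n)%nat -> qEHT_diag q e2 t1 j <> qEHT_diag q e2 t1 n) ->
  let P := qEHT_eigenpoly q e2 e1 e0 t1 t0 n in
  (e2 * x ^ 2 + e1 * x + e0) * Dz (/ q) (Dz q P) x + (t1 * x + t0) * Dz q P x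
  = qEHT_diag q e2 t1 n * P x.
Proof.
  intros hq Hd P. unfold P, qEHT_eigenpoly.
  rewrite qEHT_peval by (auto; intros k hk; apply tri_coef_above; exact hk).
  rewrite <- peval_scal. apply peval_ext. intro k.
  pose proof (tri_coef_rec _ (qEHT_sub1 q e1 t0) (qEHT_sub2 q e0) n Hd k).
  unfold qEHT_eigencoef. lra.
Qed.

Lemma lambda_n_qEHT_diag q t1 s1 n : lambda_n q t1 s1 n = - qEHT_diag q (s1 / 2) t1 n.
Proof.
  unfold lambda_n, qEHT_diag, qnum. destruct n as [|k].
  - simpl. rewrite qint_0. unfold Rdiv. ring.
  - replace (Z.of_nat (S k) - 1)%Z with (Z.of_nat k) by lia.
    rewrite <- !pow_powerRZ. unfold qint. simpl pred. unfold Rdiv. ring.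
Qed.

Lemma qEHT_diag_closed_form q e2 t1 j : 0 < q < 1 -> e2 <> 0 ->
  qEHT_diag q e2 t1 j = e2 * q / (1 - q) ^ 2 *
     (q / q ^ j + (1 + (1 - / q) * t1 / e2) * q ^ j - q - (1 + (1 - / q) * t1 / e2)).
Proof.
  intros hq he. assert (q <> 0) by lra. assert (1 - q <> 0) by lra.
  destruct j as [|j].
  - unfold qEHT_diag. rewrite qint_0. simpl. field. auto.
  - unfold qEHT_diag, qint. simpl pred. rewrite pow_inv.
    assert (q ^ j <> 0) by (apply pow_nonzero; auto).
    simpl. field. repeat split; auto. intro h. apply (inv_neq_1 q hq). lra.
Qed.

(* With u = q^k and L = 1 + (1 - 1/q) t1 / e2, the k-th eigenvalue is an affine
   function of g(u) = q/u + L u, and g(u) = g(v) with u <> v forces L u v = q,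
   impossible when L < 1 and u v <= q. *)
Lemma qEHT_diag_inj q e2 t1 j n : 0 < q < 1 -> e2 <> 0 ->
  0 < 1 + (1 - / q) * t1 / e2 < 1 -> j <> n -> qEHT_diag q e2 t1 j <> qEHT_diag q e2 t1 n.
Proof.
  intros hq he HL hjn E. rewrite !qEHT_diag_closed_form in E by auto.
  set (L := 1 + (1 - / q) * t1 / e2) in *.
  assert (q <> 0) by lra.
  assert (Hu : 0 < q ^ j) by (apply pow_lt; lra).
  assert (Hv : 0 < q ^ n) by (apply pow_lt; lra).
  assert (Hlt : forall i k, (i < k)%nat -> q ^ k < q ^ i).
  { intros i k hik. replace k with (i + (k - i))%nat by lia. rewrite pow_add.
    assert (0 < q ^ i) by (apply pow_lt; lra).
    assert (0 <= q ^ (k - i) < 1) by (apply pow_lt_1_compat; lra || lia). nra. }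
  assert (Huv : q ^ j <> q ^ n).
  { destruct (Nat.lt_total j n) as [h|[h|h]]; [|lia|]; apply Hlt in h; lra. }
  assert (Hp : q ^ j * q ^ n <= q).
  { rewrite <- pow_add. replace (j + n)%nat with (S (j + n - 1)) by lia. simpl.
    assert (0 <= q ^ (j + n - 1) <= 1).
    { split. apply pow_le; lra. rewrite <- (pow1 (j + n - 1)). apply pow_incr; lra. }
    nra. }
  assert (Hk : e2 * q / (1 - q) ^ 2 <> 0).
  { unfold Rdiv. apply Rmult_integral_contrapositive; split.
    - apply Rmult_integral_contrapositive; split; auto.
    - apply Rinv_neq_0_compat, pow_nonzero. lra. }
  apply Rmult_eq_reg_l in E; auto.
  set (u := q ^ j) in *. set (v := q ^ n) in *.
  assert (E2 : (v - u) * (q - L * (u * v)) = 0).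
  { replace ((v - u) * (q - L * (u * v))) with
      (u * v * ((q / u + L * u - q - L) - (q / v + L * v - q - L))) by (field; lra).
    rewrite E. ring. }
  apply Rmult_integral in E2 as [E2|E2]; [lra|].
  assert (0 < u * v) by nra. nra.
Qed.

Lemma qEHT_lattice_form q s t y x : 0 < q < 1 -> x <> 0 ->
  s * Dz (/ q) (Dz q y) x + t * Dz q y x
  = (q * (s + (1 - / q) * x * t) * (y (q * x) - y x) + q ^ 2 * s * (y (/ q * x) - y x))
    / ((1 - q) * x) ^ 2.
Proof.
  intros hq hx. assert (q <> 0) by lra. assert (1 - q <> 0) by lra.
  assert (/ q * x <> 0) by (apply Rmult_integral_contrapositive; split; auto with real).
  unfold Dz. destruct (Req_EM_T x 0); [contradiction|].
  destruct (Req_EM_T (/ q * x) 0); [contradiction|].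
  replace (q * (/ q * x)) with x by (field; auto).
  field. repeat split; auto. intro h. apply (inv_neq_1 q hq). lra.
Qed.

Definition lattice_op (A C f : nat -> R) (k : nat) : R :=
  A k * (f (pred k) - f k) + C k * (f (S k) - f k).

Lemma lattice_op_green (w A C f g : nat -> R) N :
  A O = 0 -> C N = 0 -> (forall k, (k < N)%nat -> w (S k) * A (S k) = w k * C k) ->
  sum_f_R0 (fun k => w k * (lattice_op A C f k * g k - f k * lattice_op A C g k)) N = 0.
Proof.
  intros HA HC HW.
  assert (Hpartial : forall n, (n <= N)%nat ->
    sum_f_R0 (fun k => w k * (lattice_op A C f k * g k - f k * lattice_op A C g k)) n
    = w n * C n * (f (S n) * g n - f n * g (S n))).
  { induction n as [|n IH]; intro hn.
    - simpl. unfold lattice_op. simpl. rewrite HA. ring.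
    - rewrite tech5, IH by lia. unfold lattice_op. simpl pred.
      rewrite <- (HW n) by lia. ring. }
  rewrite Hpartial, HC by lia. ring.
Qed.

Lemma lattice_op_orthogonal (w A C f g : nat -> R) (lf lg : R) N :
  A O = 0 -> C N = 0 -> (forall k, (k < N)%nat -> w (S k) * A (S k) = w k * C k) ->
  (forall k, (k <= N)%nat -> lattice_op A C f k = lf * f k) ->
  (forall k, (k <= N)%nat -> lattice_op A C g k = lg * g k) ->
  lf <> lg -> sum_f_R0 (fun k => w k * (f k * g k)) N = 0.
Proof.
  intros HA HC HW Hf Hg Hl.
  pose proof (lattice_op_green w A C f g N HA HC HW) as G.
  rewrite (sum_eq _ (fun k => w k * (f k * g k) * (lf - lg))) in G.
  2:{ intros k hk. rewrite Hf, Hg by exact hk. ring. }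
  rewrite <- scal_sum in G. apply Rmult_integral in G as [G|G]; [lra | exact G].
Qed.

Lemma real_Rbar_mult c l : real (Rbar_mult (Finite c) l) = c * real l.
Proof.
  destruct l as [x| |]; simpl; try reflexivity;
  unfold Rbar_mult, Rbar_mult'; simpl;
  repeat (destruct Rle_dec || destruct Rle_lt_or_eq_dec); simpl; ring.
Qed.

Lemma qpoch_fin_S_shift a q n : qpoch_fin a q (S n) = (1 - a) * qpoch_fin (q * a) q n.
Proof.
  induction n as [|n IH]; [simpl; ring|].
  change (qpoch_fin a q (S (S n))) with (qpoch_fin a q (S n) * (1 - a * q ^ S n)).
  rewrite IH. simpl. ring.
Qed.

Lemma qpoch_inf_shift a q : qpoch_inf a q = (1 - a) * qpoch_inf (q * a) q.
Proof.
  unfold qpoch_inf. rewrite <- (Lim_seq_incr_1 (fun n => qpoch_fin a q n)).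
  rewrite (Lim_seq_ext _ (fun n => (1 - a) * qpoch_fin (q * a) q n))
    by (intro; apply qpoch_fin_S_shift).
  rewrite Lim_seq_scal_l. apply real_Rbar_mult.
Qed.

Lemma qpoch_fin_add a q m n :
  qpoch_fin a q (m + n) = qpoch_fin a q m * qpoch_fin (a * q ^ m) q n.
Proof.
  induction n as [|n IH]; [rewrite Nat.add_0_r; simpl; ring|].
  rewrite <- plus_n_Sm. simpl. rewrite IH, pow_add. ring.
Qed.

Section QPochhammerPositive.

Variables (a q : R).
Hypotheses (Hq : 0 < q < 1) (Ha : 0 <= a < 1).

Lemma qpow_bounds n : 0 < q ^ n <= 1.
Proof. split; [apply pow_lt; lra | rewrite <- (pow1 n); apply pow_incr; lra]. Qed.

Lemma qpoch_fin_pos n : 0 < qpoch_fin a q n.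
Proof.
  induction n as [|n IH]; simpl; [lra|].
  pose proof (qpow_bounds n). apply Rmult_lt_0_compat; nra.
Qed.

Lemma qpoch_fin_decr n m : (n <= m)%nat -> qpoch_fin a q m <= qpoch_fin a q n.
Proof.
  induction 1 as [|m _ IH]; [lra|]. simpl.
  pose proof (qpoch_fin_pos m). pose proof (qpow_bounds m).
  assert (0 <= qpoch_fin a q m * (a * q ^ m)) by (apply Rmult_le_pos; nra). nra.
Qed.

Lemma qpoch_fin_union_bound n : 1 - a * (1 - q ^ n) / (1 - q) <= qpoch_fin a q n.
Proof.
  induction n as [|n IH]; simpl.
  - unfold Rdiv. ring_simplify. lra.
  - pose proof (qpow_bounds n).
    replace (1 - a * (1 - q * q ^ n) / (1 - q)) with (1 - a * (1 - q ^ n) / (1 - q) - a * q ^ n)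
      by (field; lra).
    assert (0 <= a * (1 - q ^ n) / (1 - q)).
    { apply Rmult_le_pos; [nra | left; apply Rinv_0_lt_compat; lra]. }
    assert (0 <= 1 - a * q ^ n) by nra. assert (0 <= a * q ^ n) by nra. nra.
Qed.

End QPochhammerPositive.

(* Past an index m with q^m <= (1-q)/2 the union bound applied to the tail
   (a q^m; q)_j keeps (a;q)_n above half of (a;q)_m. *)
Lemma qpoch_fin_lower_bound a q : 0 < q < 1 -> 0 <= a < 1 ->
  exists c, 0 < c /\ forall n, c <= qpoch_fin a q n.
Proof.
  intros hq ha.
  destruct (pow_lt_1_zero q) with ((1 - q) / 2) as [m Hm]; [rewrite Rabs_pos_eq; lra | lra|].
  specialize (Hm m (le_n m)). rewrite Rabs_pos_eq in Hm by (apply pow_le; lra).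
  pose proof (qpoch_fin_pos a q hq ha m) as Hpm. pose proof (qpow_bounds q hq m).
  exists (qpoch_fin a q m / 2). split; [lra|]. intro n.
  destruct (le_lt_dec m n) as [h|h].
  - replace n with (m + (n - m))%nat by lia. rewrite qpoch_fin_add.
    assert (Ham : 0 <= a * q ^ m < 1) by (split; nra).
    pose proof (qpoch_fin_union_bound (a * q ^ m) q hq Ham (n - m)).
    pose proof (qpow_bounds q hq (n - m)).
    assert (a * q ^ m * (1 - q ^ (n - m)) / (1 - q) <= 1 / 2).
    { apply (Rmult_le_reg_r (1 - q)); [lra|].
      unfold Rdiv. rewrite Rmult_assoc, Rinv_l by lra. nra. }
    nra.
  - pose proof (qpoch_fin_decr a q hq ha n m ltac:(lia)). lra.
Qed.

Lemma qpoch_inf_pos a q : 0 < q < 1 -> 0 <= a < 1 -> 0 < qpoch_inf a q.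
Proof.
  intros hq ha. destruct (qpoch_fin_lower_bound a q hq ha) as (c & Hc & Hlb).
  assert (Hf : ex_finite_lim_seq (fun n => qpoch_fin a q n)).
  { apply ex_finite_lim_seq_decr with c; [|exact Hlb].
    intro n. apply qpoch_fin_decr; auto. }
  apply ex_finite_lim_seq_correct in Hf as [_ Hf].
  assert (Hle : Rbar_le (Lim_seq (fun _ => c)) (Lim_seq (fun n => qpoch_fin a q n))).
  { apply Lim_seq_le_loc. exists 0%nat. intros n _. apply Hlb. }
  rewrite Lim_seq_const in Hle. unfold qpoch_inf. rewrite <- Hf in Hle. simpl in Hle. lra.
Qed.

Lemma cexp_add z w : cexp (Cplus z w) = Cmult (cexp z) (cexp w).
Proof.
  destruct z as [z1 z2], w as [w1 w2]. unfold cexp, Cplus, Cmult. simpl.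
  rewrite exp_plus, cos_plus, sin_plus. apply injective_projections; simpl; ring.
Qed.

Lemma cexp_0 : cexp (RtoC 0) = RtoC 1.
Proof.
  unfold cexp, RtoC. simpl. rewrite exp_0, cos_0, sin_0.
  apply injective_projections; simpl; ring.
Qed.

Lemma cexp_scal_neq_0 z s : s <> 0 -> Cmult (cexp z) (RtoC s) <> RtoC 0.
Proof.
  intros hs E. destruct z as [z1 z2]. unfold cexp, Cmult, RtoC in E. simpl in E.
  injection E as E1 E2. pose proof (exp_pos z1). pose proof (sin2_cos2 z2).
  assert (Hc : cos z2 = 0) by (apply (Rmult_eq_reg_l (exp z1 * s)); [nra | nra]).
  assert (Hs : sin z2 = 0) by (apply (Rmult_eq_reg_l (exp z1 * s)); [nra | nra]).
  rewrite Hc, Hs in *. unfold Rsqr in *. lra.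
Qed.

Lemma cpow_abs_inv_q_mult q iota r x : 0 < q < 1 -> r <> 0 -> 0 < x ->
  cexp (Cmult iota (RtoC (ln q))) = RtoC r ->
  cpow_abs (/ q * x) iota = Cmult (cpow_abs x iota) (RtoC (/ r)).
Proof.
  intros hq hr hx Hi. unfold cpow_abs.
  assert (0 < / q) by (apply Rinv_0_lt_compat; lra).
  rewrite !Rabs_pos_eq by (try apply Rmult_le_pos; lra).
  rewrite ln_mult, ln_Rinv by (auto; lra).
  assert (Hinv : cexp (Cmult iota (RtoC (- ln q))) = RtoC (/ r)).
  { transitivity (Cmult (Cmult (cexp (Cmult iota (RtoC (- ln q)))) (cexp (Cmult iota (RtoC (ln q)))))
                         (RtoC (/ r))).
    - rewrite Hi, <- Cmult_assoc, <- RtoC_mult, Rinv_r by exact hr. ring.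
    - rewrite <- cexp_add.
      replace (Cplus (Cmult iota (RtoC (- ln q))) (Cmult iota (RtoC (ln q)))) with (RtoC 0)
        by (rewrite RtoC_opp; ring).
      rewrite cexp_0. ring. }
  rewrite <- Hinv, <- cexp_add. f_equal. rewrite RtoC_plus, RtoC_opp. ring.
Qed.

Lemma cpow_abs_geom q iota r a k : 0 < q < 1 -> r <> 0 -> 0 < a ->
  cexp (Cmult iota (RtoC (ln q))) = RtoC r ->
  cpow_abs ((/ q) ^ k * a) iota = Cmult (cpow_abs a iota) (RtoC ((/ r) ^ k)).
Proof.
  intros hq hr ha Hi. induction k as [|k IH].
  - simpl. rewrite Rmult_1_l. ring.
  - assert (0 < (/ q) ^ k * a) by (apply Rmult_lt_0_compat; auto; apply pow_lt, Rinv_0_lt_compat; lra).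
    simpl. rewrite Rmult_assoc, (cpow_abs_inv_q_mult q iota r) by auto.
    rewrite IH, RtoC_mult. ring.
Qed.

Lemma csum_scal (F : nat -> C) (g : nat -> R) (u : C) N :
  (forall k, (k <= N)%nat -> F k = Cmult u (RtoC (g k))) ->
  csum F N = Cmult u (RtoC (sum_f_R0 g N)).
Proof.
  intro H. induction N as [|N IH]; [apply H; lia|].
  simpl. rewrite IH by (intros; apply H; lia). rewrite H, RtoC_plus by lia. ring.
Qed.

Lemma sum_f_R0_nonneg (f : nat -> R) N :
  (forall k, (k <= N)%nat -> 0 <= f k) -> 0 <= sum_f_R0 f N.
Proof.
  intro H. induction N as [|N IH]; [apply H; lia|].
  rewrite tech5. assert (0 <= sum_f_R0 f N) by (apply IH; intros; apply H; lia).
  assert (0 <= f (S N)) by (apply H; lia). lra.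
Qed.

Lemma sum_f_R0_nonneg_eq_0 (f : nat -> R) N :
  (forall k, (k <= N)%nat -> 0 <= f k) -> sum_f_R0 f N = 0 ->
  forall k, (k <= N)%nat -> f k = 0.
Proof.
  intro H. induction N as [|N IH]; intros Hs k hk.
  - replace k with O by lia. exact Hs.
  - rewrite tech5 in Hs.
    assert (0 <= sum_f_R0 f N) by (apply sum_f_R0_nonneg; intros; apply H; lia).
    assert (0 <= f (S N)) by (apply H; lia).
    destruct (Nat.eq_dec k (S N)) as [->|hne]; [lra|].
    apply IH; [intros; apply H; lia | lra | lia].
Qed.

(* Each q-difference lowers the degree by one and the number of known roots by one. *)
Lemma peval_geom_roots z a c n : 1 < z -> a <> 0 -> c n <> 0 ->
  ~ (forall k, (k <= n)%nat -> peval c n (z ^ k * a) = 0).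
Proof.
  intros hz ha. revert c. induction n as [|n IH]; intros c hc H.
  - specialize (H O (le_n O)). rewrite peval_0 in H. auto.
  - apply (IH (qderiv_coef z c)).
    + unfold qderiv_coef, qint. assert (1 < z ^ S n) by (apply Rlt_pow_R1; lia || lra).
      apply Rmult_integral_contrapositive; split; auto.
      unfold Rdiv. apply Rmult_integral_contrapositive; split; [lra|].
      apply Rinv_neq_0_compat. lra.
    + intros k hk.
      assert (hx : (1 - z) * (z ^ k * a) <> 0).
      { apply Rmult_integral_contrapositive; split; [lra|].
        apply Rmult_integral_contrapositive; split; auto. apply pow_nonzero. lra. }
      apply (Rmult_eq_reg_l ((1 - z) * (z ^ k * a))); [|exact hx].
      rewrite <- peval_qdiff by lra.
      replace (z * (z ^ k * a)) with (z ^ S k * a) by (simpl; ring).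
      rewrite !H by lia. ring.
Qed.

Lemma Rdiv_nonneg_lt_1 u v : 0 <= u -> u < v -> 0 <= u / v < 1.
Proof.
  intros hu huv. assert (0 < v) by lra. split.
  - apply Rmult_le_pos; [exact hu | left; apply Rinv_0_lt_compat; lra].
  - apply (Rmult_lt_reg_r v); [lra|]. unfold Rdiv. rewrite Rmult_assoc, Rinv_l by lra. lra.
Qed.

Section OrthogonalFamily.

Variables (q s1 a1 b1 t0 t1 s2 a2 b2 : R) (N : nat) (iota : C).

Hypothesis Hq : 0 < q < 1.
Hypothesis Hs1 : s1 <> 0.
Hypothesis Hfac2 : forall x : R,
  q * ((s1 / 2 * (x - a1) * (x - b1)) + (1 - / q) * x * (t1 * x + t0))
  = s2 / 2 * (x - a2) * (x - b2).
Hypothesis Hord : 0 < a1 /\ a1 < a2 /\ a2 < b1 /\ b1 < b2.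
Hypothesis HLam : 0 < q ^ 2 * ((/ q) ^ 2 * (1 + (1 - / q) * t1 / (s1 / 2))) < 1.
Hypothesis HN : (/ q) ^ (N + 1) * a2 = / q * b1.
Hypothesis Hiota :
  cexp (Cmult iota (RtoC (ln q))) = RtoC ((/ q) ^ 3 * s2 * b2 / (s1 * (/ q * b1))).

Local Notation sigma1 x := (s1 / 2 * (x - a1) * (x - b1)).
Local Notation sigma2 x := (s2 / 2 * (x - a2) * (x - b2)).
Local Notation Lam := (1 + (1 - / q) * t1 / (s1 / 2)).
Local Notation q_pow_iota := ((/ q) ^ 3 * s2 * b2 / (s1 * (/ q * b1))).

Definition node (k : nat) : R := (/ q) ^ k * a2.

Definition rho_factor (x : R) : R :=
  qpoch_inf (q * a2 / x) q * qpoch_inf (x / (/ q * b1)) q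
  / (qpoch_inf (a1 / x) q * qpoch_inf (x / b2) q).

(* [weight k] is q^(-k) rho(node k) up to the constant factor |a|^iota *)
Definition weight (k : nat) : R := (/ q) ^ k * (/ q_pow_iota) ^ k * rho_factor (node k).

Definition eigenpoly (n : nat) : R -> R :=
  qEHT_eigenpoly q (s1 / 2) (- (s1 / 2) * (a1 + b1)) (s1 / 2 * a1 * b1) t1 t0 n.

Definition lattice_A (k : nat) : R := sigma2 (node k) / ((1 - q) * node k) ^ 2.
Definition lattice_C (k : nat) : R := q ^ 2 * sigma1 (node k) / ((1 - q) * node k) ^ 2.

Lemma Lam_bounds : 0 < Lam < 1.
Proof.
  assert (q <> 0) by lra.
  replace Lam with (q ^ 2 * ((/ q) ^ 2 * Lam)) by (field; auto). exact HLam.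
Qed.

(* Compare the x^2-coefficients of the two sides of [Hfac2]. *)
Lemma s2_eq : s2 = q * s1 * Lam.
Proof.
  pose proof (Hfac2 0) as E0. pose proof (Hfac2 1) as E1. pose proof (Hfac2 (-1)) as Em.
  replace s2 with (s2 / 2 * (1 - a2) * (1 - b2) + s2 / 2 * (-1 - a2) * (-1 - b2)
                   - 2 * (s2 / 2 * (0 - a2) * (0 - b2))) by field.
  rewrite <- E1, <- Em, <- E0. field. split; lra.
Qed.

Lemma q_pow_iota_pos : 0 < q_pow_iota.
Proof.
  destruct Hord as (? & ? & ? & ?). pose proof Lam_bounds.
  replace q_pow_iota with (/ q * Lam * b2 / b1) by (rewrite s2_eq; field; split; lra).
  assert (0 < / q) by (apply Rinv_0_lt_compat; lra).
  apply Rdiv_lt_0_compat; [repeat apply Rmult_lt_0_compat|]; lra.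
Qed.

Lemma node_S k : node (S k) = / q * node k.
Proof. unfold node. simpl. ring. Qed.

Lemma node_ge k : a2 <= node k.
Proof.
  destruct Hord as (? & ? & ? & ?). unfold node.
  assert (1 <= (/ q) ^ k) by (apply pow_R1_Rle; rewrite <- Rinv_1; apply Rinv_le_contravar; lra).
  nra.
Qed.

Lemma node_N : node N = b1.
Proof.
  assert (/ q <> 0) by (apply Rinv_neq_0_compat; lra).
  apply (Rmult_eq_reg_l (/ q)); [|assumption].
  rewrite <- HN, pow_add. unfold node. simpl. ring.
Qed.

Lemma node_le k : (k <= N)%nat -> node k <= b1.
Proof.
  intro hk. rewrite <- node_N. unfold node.
  assert ((/ q) ^ k <= (/ q) ^ N).
  { apply Rle_pow; [rewrite <- Rinv_1; apply Rinv_le_contravar; lra | exact hk]. }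
  destruct Hord as (? & ? & ? & ?). nra.
Qed.

Lemma qpoch_factors_pos x : a2 <= x <= b1 ->
  0 < qpoch_inf (q * a2 / x) q /\ 0 < qpoch_inf (x / (/ q * b1)) q /\
  0 < qpoch_inf (a1 / x) q /\ 0 < qpoch_inf (x / b2) q.
Proof.
  intro hx. destruct Hord as (? & ? & ? & ?).
  assert (0 < / q * b1) by (apply Rmult_lt_0_compat; [apply Rinv_0_lt_compat|]; lra).
  assert (x < / q * b1).
  { apply (Rmult_lt_reg_l q); [lra|]. rewrite <- Rmult_assoc, Rinv_r by lra. nra. }
  repeat split; apply qpoch_inf_pos, Rdiv_nonneg_lt_1; auto; nra.
Qed.

Lemma weight_pos k : (k <= N)%nat -> 0 < weight k.
Proof.
  intro hk. pose proof (node_ge k). pose proof (node_le k hk). pose proof q_pow_iota_pos.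
  destruct (qpoch_factors_pos (node k)) as (? & ? & ? & ?); [lra|].
  unfold weight, rho_factor.
  assert (0 < (/ q) ^ k) by (apply pow_lt, Rinv_0_lt_compat; lra).
  assert (0 < (/ q_pow_iota) ^ k) by (apply pow_lt, Rinv_0_lt_compat; lra).
  repeat apply Rmult_lt_0_compat; auto. apply Rinv_0_lt_compat, Rmult_lt_0_compat; auto.
Qed.

(* Pearson equation; the factor q^iota is exactly what the shift relation
   (alpha;q)_oo = (1 - alpha) (q alpha;q)_oo of the four q-Pochhammer symbols leaves over. *)
Lemma weight_pearson k : (k < N)%nat ->
  weight (S k) * sigma2 (node (S k)) = weight k * sigma1 (node k).
Proof.
  intro hk. destruct Hord as (? & ? & ? & ?).
  pose proof (node_ge k) as hx. pose proof (node_le (S k) hk) as hx'.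
  pose proof q_pow_iota_pos. pose proof s2_eq. pose proof Lam_bounds.
  destruct (qpoch_factors_pos (node k)) as (? & ? & ? & ?); [pose proof (node_le k ltac:(lia)); lra|].
  destruct (qpoch_factors_pos (node (S k))) as (? & ? & ? & ?); [pose proof (node_ge (S k)); lra|].
  unfold weight, rho_factor. rewrite node_S in *. set (x := node k) in *.
  rewrite (qpoch_inf_shift (q * a2 / x) q), (qpoch_inf_shift (/ q * x / (/ q * b1)) q),
          (qpoch_inf_shift (a1 / x) q), (qpoch_inf_shift (/ q * x / b2) q).
  replace (q * (q * a2 / x)) with (q * a2 / (/ q * x)) by (field; lra).
  replace (q * (/ q * x / (/ q * b1))) with (x / (/ q * b1)) by (field; lra).
  replace (q * (a1 / x)) with (a1 / (/ q * x)) by (field; lra).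
  replace (q * (/ q * x / b2)) with (x / b2) by (field; lra).
  assert (x <= q * b1).
  { replace x with (q * (/ q * x)) by (field; lra). apply Rmult_le_compat_l; lra. }
  simpl pow. field. repeat split; try lra; nra.
Qed.

Lemma node_pos k : 0 < node k.
Proof. pose proof (node_ge k). destruct Hord as (? & ? & ? & ?). lra. Qed.

Lemma lattice_A_0 : lattice_A O = 0.
Proof. unfold lattice_A, node. simpl. unfold Rdiv. ring. Qed.

Lemma lattice_C_N : lattice_C N = 0.
Proof. unfold lattice_C. rewrite node_N. unfold Rdiv. ring. Qed.

Lemma weight_lattice_balance k : (k < N)%nat ->
  weight (S k) * lattice_A (S k) = weight k * lattice_C k.
Proof.
  intro hk. pose proof (node_pos k). unfold lattice_A, lattice_C.
  replace (weight (S k) * (sigma2 (node (S k)) / ((1 - q) * node (S k)) ^ 2))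
    with (q ^ 2 * (weight (S k) * sigma2 (node (S k))) / ((1 - q) * node k) ^ 2)
    by (rewrite node_S; field; repeat split; lra).
  rewrite weight_pearson by exact hk. field. split; lra.
Qed.

Lemma lambda_n_inj m n : m <> n -> lambda_n q t1 s1 m <> lambda_n q t1 s1 n.
Proof.
  intros hmn E. rewrite !lambda_n_qEHT_diag in E.
  apply (qEHT_diag_inj q (s1 / 2) t1 m n Hq ltac:(lra) Lam_bounds hmn). lra.
Qed.

Lemma eigenpoly_qEHT n :
  solves_qEHT q (fun x => sigma1 x) (fun x => t1 * x + t0) (lambda_n q t1 s1 n) (eigenpoly n).
Proof.
  intro x.
  assert (Hd : forall j, (j < n)%nat ->
                 qEHT_diag q (s1 / 2) t1 j <> qEHT_diag q (s1 / 2) t1 n).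
  { intros j hj. apply qEHT_diag_inj; auto using Lam_bounds; [lra | lia]. }
  pose proof (qEHT_eigenpoly_eq q (s1 / 2) (- (s1 / 2) * (a1 + b1)) (s1 / 2 * a1 * b1)
                t1 t0 n x Hq Hd) as E.
  rewrite lambda_n_qEHT_diag.
  replace (sigma1 x) with (s1 / 2 * x ^ 2 + - (s1 / 2) * (a1 + b1) * x + s1 / 2 * a1 * b1)
    by ring.
  cbv zeta in E. fold (eigenpoly n) in E. lra.
Qed.

Lemma eigenpoly_lattice n k :
  lattice_op lattice_A lattice_C (fun j => eigenpoly n (node j)) k
  = - lambda_n q t1 s1 n * eigenpoly n (node k).
Proof.
  set (P := eigenpoly n). pose proof (node_pos k) as hx.
  pose proof (eigenpoly_qEHT n (node k)) as E. cbv beta in E. fold P in E.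
  rewrite qEHT_lattice_form, Hfac2 in E by lra.
  assert (Hprev : lattice_A k * (P (node (pred k)) - P (node k))
                  = lattice_A k * (P (q * node k) - P (node k))).
  { destruct k as [|k]; [rewrite lattice_A_0; ring|].
    simpl pred. rewrite node_S. replace (q * (/ q * node k)) with (node k) by (field; lra).
    reflexivity. }
  unfold lattice_op. rewrite Hprev, node_S. unfold lattice_A, lattice_C.
  set (x := node k) in *.
  transitivity ((sigma2 x * (P (q * x) - P x) + q ^ 2 * sigma1 x * (P (/ q * x) - P x))
                / ((1 - q) * x) ^ 2); [field; split; lra | lra].
Qed.

Lemma eigenpoly_orthogonal m n : m <> n ->
  sum_f_R0 (fun k => weight k * (eigenpoly n (node k) * eigenpoly m (node k))) N = 0.
Proof.
  intro hmn.
  apply (lattice_op_orthogonal weight lattice_A lattice_C _ _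
           (- lambda_n q t1 s1 n) (- lambda_n q t1 s1 m) N lattice_A_0 lattice_C_N
           weight_lattice_balance); intros; try apply eigenpoly_lattice.
  intro E. apply (lambda_n_inj m n hmn). lra.
Qed.

(* A zero norm would force the degree-n polynomial P_n to vanish at n + 1 nodes. *)
Lemma eigenpoly_norm_neq_0 n : (n <= N)%nat ->
  sum_f_R0 (fun k => weight k * (eigenpoly n (node k) * eigenpoly n (node k))) N <> 0.
Proof.
  intros hn Z. destruct Hord as (? & ? & ? & ?).
  set (c := qEHT_eigencoef q (s1 / 2) (- (s1 / 2) * (a1 + b1)) (s1 / 2 * a1 * b1) t1 t0 n).
  apply (peval_geom_roots (/ q) a2 c n).
  - rewrite <- Rinv_1. apply Rinv_lt_contravar; lra.
  - lra.
  - unfold c, qEHT_eigencoef. rewrite tri_coef_top. lra.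
  - intros k hk.
    assert (Hk : weight k * (eigenpoly n (node k) * eigenpoly n (node k)) = 0).
    { apply (sum_f_R0_nonneg_eq_0
               (fun j => weight j * (eigenpoly n (node j) * eigenpoly n (node j))) N);
        [|exact Z | lia].
      intros j hj. apply Rmult_le_pos; [left; apply weight_pos, hj | apply Rle_0_sqr]. }
    pose proof (weight_pos k ltac:(lia)).
    assert (Hroot : eigenpoly n (node k) = 0) by (apply Rsqr_0_uniq; unfold Rsqr; nra).
    rewrite <- Hroot. unfold eigenpoly, qEHT_eigenpoly, node. fold c.
    symmetry. apply peval_trunc; [intros j hj; apply tri_coef_above, hj | lia].
Qed.

Lemma jackson_weight (f : R -> R) :
  jackson_inv q a2 N
    (fun x => Cmult (RtoC (f x)) (Cmult (cpow_abs x iota) (RtoC (rho_factor x))))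
  = Cmult (cpow_abs a2 iota)
      (RtoC ((/ q - 1) * a2 * sum_f_R0 (fun k => weight k * f (node k)) N)).
Proof.
  destruct Hord as (? & ? & ? & ?). pose proof q_pow_iota_pos.
  unfold jackson_inv.
  rewrite (csum_scal _ (fun k => weight k * f (node k)) (cpow_abs a2 iota)).
  - rewrite !RtoC_mult. ring.
  - intros k _. rewrite (cpow_abs_geom q iota q_pow_iota a2 k) by (auto; lra).
    unfold weight, node. rewrite !RtoC_mult. ring.
Qed.

Lemma qEHT_orthogonal_family :
  let sigma1 := fun x : R => s1 / 2 * (x - a1) * (x - b1) in
  let tau := fun x : R => t1 * x + t0 in
  let rho := fun x : R =>
    Cmult (cpow_abs x iota)
      (RtoC (qpoch_inf (q * a2 / x) q * qpoch_inf (x / (/ q * b1)) q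
             / (qpoch_inf (a1 / x) q * qpoch_inf (x / b2) q))) in
  exists (P : nat -> R -> R) (d : nat -> C),
    (forall n : nat, (n <= N)%nat ->
       is_poly_deg (P n) n /\ solves_qEHT q sigma1 tau (lambda_n q t1 s1 n) (P n)
       /\ d n <> RtoC 0) /\
    (forall m n : nat, (m <= N)%nat -> (n <= N)%nat ->
       jackson_inv q a2 N (fun x => Cmult (RtoC (P n x * P m x)) (rho x))
       = (if Nat.eqb m n then d n else RtoC 0)).
Proof.
  intros sigma1 tau rho. destruct Hord as (? & ? & ? & ?).
  set (norm n := sum_f_R0 (fun k => weight k * (eigenpoly n (node k) * eigenpoly n (node k))) N).
  exists eigenpoly, (fun n => Cmult (cpow_abs a2 iota) (RtoC ((/ q - 1) * a2 * norm n))).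
  split.
  - intros n hn. split; [apply qEHT_eigenpoly_deg | split; [apply eigenpoly_qEHT|]].
    apply cexp_scal_neq_0. apply Rmult_integral_contrapositive; split.
    + assert (1 < / q) by (rewrite <- Rinv_1; apply Rinv_lt_contravar; lra).
      apply Rmult_integral_contrapositive; split; lra.
    + apply eigenpoly_norm_neq_0, hn.
  - intros m n _ _.
    etransitivity; [exact (jackson_weight (fun x => eigenpoly n x * eigenpoly m x))|].
    cbv beta. destruct (Nat.eqb_spec m n) as [<-|hmn]; [reflexivity|].
    rewrite eigenpoly_orthogonal by exact hmn. rewrite Rmult_0_r. ring.
Qed.

End OrthogonalFamily.

Theorem theorem4p3
  (q : R) (Hq : 0 < q < 1)
  (s1 a1 b1 : R) (t0 t1 : R) (Ht1 : t1 <> 0) (Hs1 : s1 <> 0)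
  (s2 a2 b2 : R) (Hs2 : s2 <> 0)
  (Hfac2 : forall x : R,
      q * ((s1 / 2 * (x - a1) * (x - b1)) + (1 - / q) * x * (t1 * x + t0))
      = s2 / 2 * (x - a2) * (x - b2))
  (Hord : 0 < a1 /\ a1 < a2 /\ a2 < b1 /\ b1 < b2)
  (HLam : 0 < q ^ 2 * ((/ q) ^ 2 * (1 + (1 - / q) * t1 / (s1 / 2))) < 1)
  (a b : R) (Ha : a = a2) (Hb : b = / q * b1)
  (N : nat) (HN : (/ q) ^ (N + 1) * a = b)
  (iota : C)
  (Hiota : cexp (Cmult iota (RtoC (ln q))) = RtoC ((/ q) ^ 3 * s2 * b2 / (s1 * b))) :
  let sigma1 := fun x : R => s1 / 2 * (x - a1) * (x - b1) in
  let tau := fun x : R => t1 * x + t0 in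
  let rho := fun x : R =>
    Cmult (cpow_abs x iota)
      (RtoC (qpoch_inf (q * a / x) q * qpoch_inf (x / b) q
             / (qpoch_inf (a1 / x) q * qpoch_inf (x / b2) q))) in
  exists (P : nat -> R -> R) (d : nat -> C),
    (forall n : nat, (n <= N)%nat ->
       is_poly_deg (P n) n /\ solves_qEHT q sigma1 tau (lambda_n q t1 s1 n) (P n)
       /\ d n <> RtoC 0) /\
    (forall m n : nat, (m <= N)%nat -> (n <= N)%nat ->
       jackson_inv q a N (fun x => Cmult (RtoC (P n x * P m x)) (rho x))
       = (if Nat.eqb m n then d n else RtoC 0)).
Proof.
  subst a b.
  exact (qEHT_orthogonal_family q s1 a1 b1 t0 t1 s2 a2 b2 N iota Hq Hs1 Hfac2 Hord HLam HN Hiota).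
Qed.
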